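(* For $\ell=0,1,\ldots,N$, and real $x\in\mathbb{R}^N$, $y\in\mathbb{R}^{N-\ell}$ with pairwise distinct coordinates, $$\big(H_{\rm nr}(x_1,\ldots,x_N)-H_{\rm nr}(y_1,\ldots,y_{N-\ell})\big)\Psi_{\ell,\rm nr}(x,y)=-\frac{\mu^2g^2}{24}\ell(4\ell^2-1)\Psi_{\ell,\rm nr}(x,y),$$ where $\Psi_{\ell,\rm nr}(x,y)=W_{\rm nr}(x)^{1/2}W_{\rm nr}(y)^{1/2}\mathcal{K}_\ell(x,y)$ and $$\mathcal{K}_\ell(x,y)=\frac{\exp\big(\frac{\mu g\ell}{2\hbar}\big(\sum_{n=1}^{N-\ell}y_n-\sum_{m=1}^Nx_m\big)\big)}{\prod_{m=1}^N\prod_{n=1}^{N-\ell}[2\cosh(\mu(x_m-y_n)/2)]^{g/\hbar}}.$$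
   Context: Fix $\hbar,\mu,g>0$. For $n$ variables, $H_{\rm nr}(x_1,\ldots,x_n)=-\frac{\hbar^2}{2}\sum_{j=1}^n\partial_{x_j}^2+g(g-\hbar)\sum_{1\le j<l\le n}\frac{\mu^2}{4\sinh^2(\mu(x_j-x_l)/2)}$ (for $n=0$ this is $0$), and $W_{\rm nr}(x)^{1/2}=\prod_{1\le j<k\le n}\big(4\sinh^2(\mu(x_j-x_k)/2)\big)^{g/(2\hbar)}$ with positive real powers. *)

From Stdlib Require Import Reals Lra.
From Coquelicot Require Import Coquelicot.
Open Scope R_scope.

(* Points of R^n are functions nat -> R; only indices 0..n-1 are relevant. *)

Fixpoint sumR (n : nat) (f : nat -> R) : R :=
  match n with O => 0 | S k => sumR k f + f k end.
Fixpoint prodR (n : nat) (f : nat -> R) : R :=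
  match n with O => 1 | S k => prodR k f * f k end.

Definition distinct_coords (n : nat) (x : nat -> R) : Prop :=
  forall i j, (i < n)%nat -> (j < n)%nat -> i <> j -> x i <> x j.

Definition upd (x : nat -> R) (j : nat) (t : R) : nat -> R :=
  fun i => if Nat.eqb i j then t else x i.

Definition partial2 (F : (nat -> R) -> R) (j : nat) (x : nat -> R) : R :=
  Derive_n (fun t => F (upd x j t)) 2 (x j).

Definition H_nr (hbar mu g : R) (n : nat) (F : (nat -> R) -> R) (x : nat -> R) : R :=
  - (hbar ^ 2 / 2) * sumR n (fun j => partial2 F j x)
  + g * (g - hbar) *
    sumR n (fun j => sumR n (fun l =>
      if (j <? l)%nat then mu ^ 2 / (4 * (sinh (mu * (x j - x l) / 2)) ^ 2) else 0))
    * F x.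

Definition W_nr_sqrt (hbar mu g : R) (n : nat) (x : nat -> R) : R :=
  prodR n (fun j => prodR n (fun k =>
    if (j <? k)%nat then Rpower (4 * (sinh (mu * (x j - x k) / 2)) ^ 2) (g / (2 * hbar))
    else 1)).

Definition K_l (hbar mu g : R) (N l : nat) (x y : nat -> R) : R :=
  exp (mu * g * INR l / (2 * hbar) *
       (sumR (N - l) (fun n => y n) - sumR N (fun m => x m)))
  / prodR N (fun m => prodR (N - l) (fun n =>
       Rpower (2 * cosh (mu * (x m - y n) / 2)) (g / hbar))).

Definition Psi_l (hbar mu g : R) (N l : nat) (x y : nat -> R) : R :=
  W_nr_sqrt hbar mu g N x * W_nr_sqrt hbar mu g (N - l) y * K_l hbar mu g N l x y.

From Stdlib Require Import Reals Lra Lia FunctionalExtensionality.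
From Coquelicot Require Import Coquelicot.
Open Scope R_scope.

(* Write Psi_l = exp(log Psi) with log Psi a sum of one- and two-body terms, so that for each
   coordinate d^2 Psi / Psi = (d log Psi)^2 + d^2 log Psi.  In the variables u = mu x / 2,
   v = mu y / 2 the first derivative in x_j is (mu g / 2 hbar) (sum_k coth(u_j - u_k)
   - sum_n tanh(u_j - v_n) - l), and symmetrically in y_n with +l.  The second derivative gives
   csch^2 terms, which turn the coupling g(g - hbar) of the potential into g^2 and are then
   cancelled by the diagonal part of the squared coth sums, and sech^2 terms, which are the same
   for x and y.  In the remaining squares, coth(a-b) coth(a-c) + cyclic = 1 and
   coth(a-b) (tanh(a-c) - tanh(b-c)) = 1 - tanh(a-c) tanh(b-c) reduce the three-body and mixed
   sums to constants and to tanh sums that occur identically on both sides; what is left is the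
   cubic l (4 l^2 - 1) / 3. *)

(** * Finite sums *)

Ltac nat_cases :=
  repeat match goal with
  | |- context [Nat.eqb ?a ?b] => destruct (Nat.eqb_spec a b)
  | |- context [Nat.ltb ?a ?b] => destruct (Nat.ltb_spec a b)
  end; subst; try (exfalso; lia).

Lemma sumR_ext n f g : (forall i, (i < n)%nat -> f i = g i) -> sumR n f = sumR n g.
Proof.
  induction n as [|n IH]; intros H; simpl; [reflexivity|].
  rewrite IH, (H n) by (intros; try apply H; lia); reflexivity.
Qed.

Lemma sumR_add n f g : sumR n (fun i => f i + g i) = sumR n f + sumR n g.
Proof. induction n; simpl; [lra|]. rewrite IHn; lra. Qed.

Lemma sumR_sub n f g : sumR n (fun i => f i - g i) = sumR n f - sumR n g.
Proof. induction n; simpl; [lra|]. rewrite IHn; lra. Qed.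

Lemma sumR_scal n c f : sumR n (fun i => c * f i) = c * sumR n f.
Proof. induction n; simpl; [lra|]. rewrite IHn; lra. Qed.

Lemma sumR_opp n f : sumR n (fun i => - f i) = - sumR n f.
Proof. induction n; simpl; [lra|]. rewrite IHn; lra. Qed.

Lemma sumR_const n c : sumR n (fun _ => c) = INR n * c.
Proof. induction n; simpl sumR; [simpl; lra|]. rewrite IHn, S_INR; lra. Qed.

Lemma sumR_const_sub n c f : sumR n (fun i => c - f i) = INR n * c - sumR n f.
Proof. rewrite sumR_sub, sumR_const; reflexivity. Qed.

Lemma sumR_zero n : sumR n (fun _ => 0) = 0.
Proof. rewrite sumR_const; lra. Qed.

Lemma sumR_eq0 n f : (forall i, (i < n)%nat -> f i = 0) -> sumR n f = 0.
Proof. intros H. rewrite (sumR_ext n f (fun _ => 0)) by exact H. apply sumR_zero. Qed.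

Lemma sumR_if n (b : bool) f : sumR n (fun i => if b then f i else 0) = if b then sumR n f else 0.
Proof. destruct b; [reflexivity|apply sumR_zero]. Qed.

Lemma sumR_swap n m (F : nat -> nat -> R) :
  sumR n (fun i => sumR m (fun j => F i j)) = sumR m (fun j => sumR n (fun i => F i j)).
Proof.
  induction n; simpl.
  - symmetry; apply sumR_zero.
  - rewrite IHn, <- sumR_add; reflexivity.
Qed.

Lemma sumR_mul n m f g :
  sumR n f * sumR m g = sumR n (fun i => sumR m (fun j => f i * g j)).
Proof.
  induction n as [|n IH]; simpl; [ring|].
  rewrite <- IH, (sumR_scal m (f n) g). ring.
Qed.

Lemma sumR_kronecker n j f : (j < n)%nat ->
  sumR n (fun k => if Nat.eqb k j then f k else 0) = f j.
Proof.
  induction n; intros Hj; [lia|]. simpl. nat_cases.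
  - rewrite sumR_eq0; [lra|]. intros i Hi. nat_cases; reflexivity.
  - rewrite IHn by lia; lra.
Qed.

Lemma sumR_off_diag n j f : (j < n)%nat ->
  sumR n (fun k => if Nat.eqb k j then 0 else f k) = sumR n f - f j.
Proof.
  intros Hj. rewrite <- (sumR_kronecker n j f Hj), <- sumR_sub.
  apply sumR_ext; intros i _; nat_cases; lra.
Qed.

Lemma sumR_symmetrize n (F : nat -> nat -> R) :
  2 * sumR n (fun j => sumR n (fun k => F j k)) =
  sumR n (fun j => sumR n (fun k => F j k + F k j)).
Proof.
  transitivity (sumR n (fun j => sumR n (fun k => F j k)) +
                sumR n (fun j => sumR n (fun k => F k j))).
  - rewrite (sumR_swap n n (fun k j => F j k)); ring.
  - rewrite <- sumR_add. apply sumR_ext; intros; rewrite sumR_add; reflexivity.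
Qed.

Lemma sumR_pairs_sym n (f : nat -> nat -> R) : (forall j k, f j k = f k j) ->
  2 * sumR n (fun j => sumR n (fun k => if Nat.ltb j k then f j k else 0)) =
  sumR n (fun j => sumR n (fun k => if Nat.eqb k j then 0 else f j k)).
Proof.
  intros Hf. rewrite sumR_symmetrize. do 2 (apply sumR_ext; intros).
  rewrite (Hf i0 i). nat_cases; ring.
Qed.

Definition sumR3 n (F : nat -> nat -> nat -> R) :=
  sumR n (fun a => sumR n (fun b => sumR n (fun c => F a b c))).

Lemma sumR3_ext n F G :
  (forall a b c, (a < n)%nat -> (b < n)%nat -> (c < n)%nat -> F a b c = G a b c) ->
  sumR3 n F = sumR3 n G.
Proof. intros H. unfold sumR3. do 3 (apply sumR_ext; intros). auto. Qed.

Lemma sumR3_add n F G : sumR3 n (fun a b c => F a b c + G a b c) = sumR3 n F + sumR3 n G.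
Proof.
  unfold sumR3. rewrite <- sumR_add.
  do 2 (apply sumR_ext; intros; rewrite <- sumR_add). reflexivity.
Qed.

Lemma sumR3_cycle n F : sumR3 n (fun a b c => F b c a) = sumR3 n F.
Proof.
  unfold sumR3. rewrite (sumR_swap n n (fun a b => sumR n (fun c => F b c a))).
  apply sumR_ext; intros b _. apply sumR_swap.
Qed.

Lemma prodR_ext n f g : (forall i, (i < n)%nat -> f i = g i) -> prodR n f = prodR n g.
Proof.
  induction n as [|n IH]; intros H; simpl; [reflexivity|].
  rewrite IH, (H n) by (intros; try apply H; lia); reflexivity.
Qed.

Lemma prodR_exp n f : prodR n (fun i => exp (f i)) = exp (sumR n f).
Proof. induction n; simpl; [rewrite exp_0; reflexivity|]. rewrite IHn, exp_plus; reflexivity. Qed.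

(** * Hyperbolic identities *)

Definition coth z := cosh z / sinh z.

Lemma sinh_opp z : sinh (- z) = - sinh z.
Proof. unfold sinh. rewrite Ropp_involutive. field. Qed.

Lemma cosh_opp z : cosh (- z) = cosh z.
Proof. unfold cosh. rewrite Ropp_involutive. field. Qed.

Lemma coth_opp z : coth (- z) = - coth z.
Proof. unfold coth. rewrite sinh_opp, cosh_opp, Rdiv_opp_r. reflexivity. Qed.

Lemma tanh_opp z : tanh (- z) = - tanh z.
Proof. unfold tanh. rewrite sinh_opp, cosh_opp. unfold Rdiv; ring. Qed.

Lemma cosh_pos z : 0 < cosh z.
Proof. unfold cosh. pose proof (exp_pos z); pose proof (exp_pos (- z)); lra. Qed.

Lemma sinh_neq0 z : z <> 0 -> sinh z <> 0.
Proof.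
  intros Hz E. unfold sinh in E. apply Hz.
  assert (exp z = exp (- z)) as Ez by lra. apply exp_inv in Ez. lra.
Qed.

Lemma cosh_sq_sub_sinh_sq z : cosh z ^ 2 - sinh z ^ 2 = 1.
Proof.
  assert (exp z * exp (- z) = 1) by (rewrite <- exp_plus, Rplus_opp_r, exp_0; reflexivity).
  unfold cosh, sinh. nra.
Qed.

Lemma inv_sinh2_coth z : z <> 0 -> / sinh z ^ 2 = coth z ^ 2 - 1.
Proof.
  intros Hz. pose proof (sinh_neq0 z Hz); pose proof (cosh_sq_sub_sinh_sq z).
  unfold coth. field_simplify_eq; auto. lra.
Qed.

Section ExpForm.
Variables a b : R.

Lemma sinh_sub_exp : sinh (a - b) = (exp a ^ 2 - exp b ^ 2) / (2 * exp a * exp b).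
Proof.
  unfold sinh. replace (- (a - b)) with (b - a) by ring. unfold Rminus.
  rewrite !exp_plus, !exp_Ropp. pose proof (exp_pos a); pose proof (exp_pos b). field; lra.
Qed.

Lemma cosh_sub_exp : cosh (a - b) = (exp a ^ 2 + exp b ^ 2) / (2 * exp a * exp b).
Proof.
  unfold cosh. replace (- (a - b)) with (b - a) by ring. unfold Rminus.
  rewrite !exp_plus, !exp_Ropp. pose proof (exp_pos a); pose proof (exp_pos b). field; lra.
Qed.

Lemma exp_sq_sub_neq0 : a <> b -> exp a ^ 2 - exp b ^ 2 <> 0.
Proof.
  intros Hab E. pose proof (exp_pos a); pose proof (exp_pos b).
  apply Hab, exp_inv. nra.
Qed.

Lemma coth_sub_exp : a <> b -> coth (a - b) = (exp a ^ 2 + exp b ^ 2) / (exp a ^ 2 - exp b ^ 2).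
Proof.
  intros Hab. unfold coth. rewrite sinh_sub_exp, cosh_sub_exp.
  pose proof (exp_sq_sub_neq0 Hab); pose proof (exp_pos a); pose proof (exp_pos b).
  field; repeat split; lra.
Qed.

Lemma tanh_sub_exp : tanh (a - b) = (exp a ^ 2 - exp b ^ 2) / (exp a ^ 2 + exp b ^ 2).
Proof.
  unfold tanh. rewrite sinh_sub_exp, cosh_sub_exp.
  pose proof (exp_pos a); pose proof (exp_pos b). field; repeat split; nra.
Qed.

End ExpForm.

Lemma coth_cyclic a b c : a <> b -> b <> c -> c <> a ->
  coth (a - b) * coth (a - c) + coth (b - c) * coth (b - a) + coth (c - a) * coth (c - b) = 1.
Proof.
  intros Hab Hbc Hca. rewrite !coth_sub_exp by auto.
  pose proof (exp_sq_sub_neq0 _ _ Hab); pose proof (exp_sq_sub_neq0 _ _ Hbc);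
  pose proof (exp_sq_sub_neq0 _ _ Hca).
  field. repeat split; lra.
Qed.

Lemma coth_mul_tanh_sub a b c : a <> b ->
  coth (a - b) * (tanh (a - c) - tanh (b - c)) = 1 - tanh (a - c) * tanh (b - c).
Proof.
  intros Hab. rewrite coth_sub_exp, !tanh_sub_exp by auto.
  pose proof (exp_sq_sub_neq0 _ _ Hab).
  pose proof (exp_pos a); pose proof (exp_pos b); pose proof (exp_pos c).
  field. repeat split; nra.
Qed.

(** * Sums of coth and tanh *)

Definition coth_sum n (u : nat -> R) j :=
  sumR n (fun k => if Nat.eqb k j then 0 else coth (u j - u k)).
Definition csch2_sum n (u : nat -> R) j :=
  sumR n (fun k => if Nat.eqb k j then 0 else / sinh (u j - u k) ^ 2).
Definition tanh_sum m (u v : nat -> R) j := sumR m (fun k => tanh (u j - v k)).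
Definition sech2_sum m (u v : nat -> R) j := sumR m (fun k => / cosh (u j - v k) ^ 2).
Definition tanh2_sum n m (u v : nat -> R) :=
  sumR n (fun j => sumR m (fun k => tanh (u j - v k) ^ 2)).

Lemma sumR_tanh_sum_swap n m u v : sumR n (tanh_sum m u v) = - sumR m (tanh_sum n v u).
Proof.
  unfold tanh_sum. rewrite sumR_swap, <- sumR_opp. apply sumR_ext; intros k _.
  rewrite <- sumR_opp. apply sumR_ext; intros j _.
  replace (u j - v k) with (- (v k - u j)) by ring. rewrite tanh_opp; ring.
Qed.

Lemma tanh2_sum_swap n m u v : tanh2_sum m n v u = tanh2_sum n m u v.
Proof.
  unfold tanh2_sum. rewrite sumR_swap. do 2 (apply sumR_ext; intros).
  replace (v _ - u _) with (- (u i - v i0)) by ring. rewrite tanh_opp; ring.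
Qed.

Lemma sumR_sech2_sum_swap n m u v : sumR n (sech2_sum m u v) = sumR m (sech2_sum n v u).
Proof.
  unfold sech2_sum. rewrite sumR_swap. do 2 (apply sumR_ext; intros).
  replace (u _ - v _) with (- (v i - u i0)) by ring. rewrite cosh_opp; reflexivity.
Qed.

Section CothSums.
Variables (n : nat) (u : nat -> R).
Hypothesis Hu : distinct_coords n u.

Lemma coth_antisym j k : coth (u k - u j) = - coth (u j - u k).
Proof. replace (u k - u j) with (- (u j - u k)) by ring. apply coth_opp. Qed.

Lemma sumR_coth_sum : sumR n (coth_sum n u) = 0.
Proof.
  enough (2 * sumR n (coth_sum n u) = 0) by lra.
  unfold coth_sum. rewrite sumR_symmetrize. apply sumR_eq0; intros j _.
  apply sumR_eq0; intros k _.
  rewrite coth_antisym. nat_cases; ring.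
Qed.

Lemma sumR_coth_sum_mul_tanh_sum m v :
  2 * sumR n (fun j => coth_sum n u j * tanh_sum m u v j) =
  INR n * (INR n - 1) * INR m - sumR m (fun k => tanh_sum n v u k ^ 2) + tanh2_sum n m u v.
Proof.
  set (t j k := tanh (u j - v k)).
  assert (Hpair : forall j k, (j < n)%nat -> (k < n)%nat ->
    (if Nat.eqb k j then 0 else coth (u j - u k) * tanh_sum m u v j) +
    (if Nat.eqb j k then 0 else coth (u k - u j) * tanh_sum m u v k) =
    (if Nat.eqb k j then 0 else sumR m (fun i => 1 - t j i * t k i))).
  { intros j k Hj Hk. rewrite (coth_antisym j k). nat_cases; [ring|].
    transitivity (coth (u j - u k) * (tanh_sum m u v j - tanh_sum m u v k)); [ring|].
    unfold tanh_sum. rewrite <- sumR_sub, <- sumR_scal. apply sumR_ext; intros i _.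
    apply coth_mul_tanh_sub, Hu; auto. }
  assert (Hcol : forall k,
    tanh_sum n v u k ^ 2 = sumR n (fun j => sumR n (fun j' => t j k * t j' k))).
  { intros k. rewrite <- sumR_mul. unfold tanh_sum, t.
    replace (sumR n (fun j => tanh (u j - v k)))
      with (- sumR n (fun j => tanh (v k - u j))); [ring|].
    rewrite <- sumR_opp. apply sumR_ext; intros j _.
    replace (u j - v k) with (- (v k - u j)) by ring. rewrite tanh_opp; ring. }
  transitivity (sumR n (fun j => sumR n (fun k =>
    if Nat.eqb k j then 0 else sumR m (fun i => 1 - t j i * t k i)))).
  { unfold coth_sum.
    rewrite (sumR_ext n _ (fun j => sumR n (fun k =>
               if Nat.eqb k j then 0 else coth (u j - u k) * tanh_sum m u v j))).
    - rewrite sumR_symmetrize. do 2 (apply sumR_ext; intros). auto.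
    - intros j _. rewrite Rmult_comm, <- sumR_scal. apply sumR_ext; intros. nat_cases; ring. }
  rewrite (sumR_ext n _ (fun j => sumR n (fun k => sumR m (fun i => 1 - t j i * t k i))
                                  - sumR m (fun i => 1 - t j i * t j i)))
    by (intros; apply sumR_off_diag; auto).
  rewrite sumR_sub, sumR_swap.
  assert (Hsq : sumR m (fun k => tanh_sum n v u k ^ 2) =
                sumR n (fun j => sumR n (fun i => sumR m (fun k => t i k * t j k)))).
  { rewrite (sumR_ext m _ _ (fun k _ => Hcol k)), sumR_swap. apply sumR_ext; intros j _.
    rewrite sumR_swap. do 2 (apply sumR_ext; intros). ring. }
  rewrite Hsq. unfold tanh2_sum.
  replace (sumR n (fun j => sumR n (fun i => sumR m (fun k => 1 - t i k * t j k)))) with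
    (INR n * (INR n * (INR m * 1))
     - sumR n (fun j => sumR n (fun i => sumR m (fun k => t i k * t j k)))).
  2: { rewrite <- sumR_const_sub. apply sumR_ext; intros.
       rewrite <- sumR_const_sub. apply sumR_ext; intros. symmetry; apply sumR_const_sub. }
  replace (sumR n (fun i => sumR m (fun k => 1 - t i k * t i k))) with
    (INR n * (INR m * 1) - sumR n (fun j => sumR m (fun k => tanh (u j - v k) ^ 2))).
  2: { rewrite <- sumR_const_sub. apply sumR_ext; intros.
       rewrite <- sumR_const_sub. apply sumR_ext; intros. unfold t; ring. }
  ring.
Qed.

Let triple_term a b c :=
  if Nat.eqb b a then 0 else if Nat.eqb c a then 0 else if Nat.eqb c b then 0
  else coth (u a - u b) * coth (u a - u c).
Let triple_count a b c :=
  if Nat.eqb b a then 0 else if Nat.eqb c a then 0 else if Nat.eqb c b then 0 else 1.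

Lemma sumR3_triple_count : sumR3 n triple_count = INR n * (INR n - 1) * (INR n - 2).
Proof.
  unfold sumR3, triple_count.
  rewrite (sumR_ext n _ (fun a => (INR n - 1) * (INR n - 2))), sumR_const; [ring|].
  intros a Ha.
  rewrite (sumR_ext n _ (fun b => if Nat.eqb b a then 0 else INR n - 2)).
  - rewrite sumR_off_diag, sumR_const by exact Ha. ring.
  - intros b Hb. nat_cases; [apply sumR_zero|].
    rewrite (sumR_ext n _ (fun c =>
               1 - (if Nat.eqb c a then 1 else 0) - (if Nat.eqb c b then 1 else 0))).
    + rewrite !sumR_sub, sumR_const, (sumR_kronecker n a (fun _ => 1)),
        (sumR_kronecker n b (fun _ => 1)) by auto.
      ring.
    + intros c Hc. nat_cases; ring.
Qed.

(* The cyclic identity [coth_cyclic] makes the three rotations of a distinct triple sum to 1. *)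
Lemma sumR3_triple_term : 3 * sumR3 n triple_term = sumR3 n triple_count.
Proof.
  transitivity (sumR3 n (fun a b c => triple_term a b c + triple_term b c a + triple_term c a b)).
  - pose proof (sumR3_cycle n triple_term) as Hrot1.
    pose proof (sumR3_cycle n (fun a b c => triple_term b c a)) as Hrot2. cbv beta in Hrot2.
    rewrite !sumR3_add. lra.
  - apply sumR3_ext; intros a b c Ha Hb Hc. unfold triple_term, triple_count. nat_cases; try ring.
    apply coth_cyclic; apply Hu; auto.
Qed.

Lemma sumR_coth_sum_sq :
  sumR n (fun j => coth_sum n u j ^ 2) =
  sumR n (csch2_sum n u) + INR n * (INR n - 1) * (INR n + 1) / 3.
Proof.
  assert (Hsplit : sumR n (fun j => coth_sum n u j ^ 2) = sumR3 n triple_term +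
    sumR n (fun a => sumR n (fun b => if Nat.eqb b a then 0 else coth (u a - u b) ^ 2))).
  { rewrite (sumR_ext n _ (fun a => sumR n (fun b => sumR n (fun c => triple_term a b c +
        if Nat.eqb c b then (if Nat.eqb b a then 0 else coth (u a - u b) ^ 2) else 0)))).
    - unfold sumR3. rewrite <- sumR_add. apply sumR_ext; intros a _. rewrite <- sumR_add.
      apply sumR_ext; intros b Hb. rewrite sumR_add, sumR_kronecker by exact Hb. reflexivity.
    - intros a _. rewrite <- Rsqr_pow2. unfold Rsqr, coth_sum. rewrite sumR_mul.
      do 2 (apply sumR_ext; intros). unfold triple_term. nat_cases; ring. }
  assert (Hdiag : forall a, (a < n)%nat ->
    sumR n (fun b => if Nat.eqb b a then 0 else coth (u a - u b) ^ 2) =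
    csch2_sum n u a + (INR n - 1)).
  { intros a Ha. unfold csch2_sum.
    rewrite (sumR_ext n _ (fun b => (if Nat.eqb b a then 0 else / sinh (u a - u b) ^ 2) +
                                    (if Nat.eqb b a then 0 else 1))).
    - rewrite sumR_add, (sumR_off_diag n a (fun _ => 1)), sumR_const by exact Ha. ring.
    - intros b Hb. nat_cases; [ring|]. rewrite inv_sinh2_coth; [ring|].
      intro E. apply (Hu a b); auto. lra. }
  rewrite Hsplit, (sumR_ext n _ _ Hdiag), sumR_add, sumR_const.
  pose proof sumR3_triple_term. rewrite sumR3_triple_count in *. lra.
Qed.
End CothSums.

Lemma sumR_sq_sub n f g c :
  sumR n (fun j => (f j - g j - c) ^ 2) =
  sumR n (fun j => f j ^ 2) + sumR n (fun j => g j ^ 2) + INR n * c ^ 2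
  - 2 * sumR n (fun j => f j * g j) - 2 * c * sumR n f + 2 * c * sumR n g.
Proof. induction n as [|n IH]; [simpl; ring|]. cbn [sumR]. rewrite IH, S_INR. ring. Qed.

Definition coth_tanh_energy n m (u v : nat -> R) c :=
  sumR n (fun j => (coth_sum n u j - tanh_sum m u v j - c) ^ 2) - sumR n (csch2_sum n u).

Lemma coth_tanh_energy_eq n m u v c : distinct_coords n u ->
  coth_tanh_energy n m u v c =
  (INR n - 1) * INR n * (INR n + 1) / 3 - INR n * (INR n - 1) * INR m + INR n * c ^ 2
  + 2 * c * sumR n (tanh_sum m u v)
  + sumR n (fun j => tanh_sum m u v j ^ 2) + sumR m (fun k => tanh_sum n v u k ^ 2)
  - tanh2_sum n m u v.
Proof.
  intros Hu. unfold coth_tanh_energy.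
  rewrite sumR_sq_sub, sumR_coth_sum_sq, sumR_coth_sum by exact Hu.
  pose proof (sumR_coth_sum_mul_tanh_sum n u Hu m v). lra.
Qed.

(* All tanh terms occur symmetrically in the two energies and cancel. *)
Lemma coth_tanh_energy_difference n m l u v :
  distinct_coords n u -> distinct_coords m v -> (m + l)%nat = n ->
  coth_tanh_energy n m u v (INR l) - coth_tanh_energy m n v u (- INR l) =
  INR l * (4 * INR l ^ 2 - 1) / 3.
Proof.
  intros Hu Hv Hl.
  rewrite (coth_tanh_energy_eq n m u v), (coth_tanh_energy_eq m n v u) by assumption.
  rewrite (sumR_tanh_sum_swap m n v u), tanh2_sum_swap, <- Hl, plus_INR. field.
Qed.

(** * Derivatives *)

Lemma is_derive_sumR n (f : nat -> R -> R) df t :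
  (forall k, (k < n)%nat -> is_derive (f k) t (df k)) ->
  is_derive (fun s => sumR n (fun k => f k s)) t (sumR n df).
Proof.
  induction n; intros H; simpl.
  - apply (is_derive_const 0).
  - apply (is_derive_plus (fun s => sumR n (fun k => f k s)) (f n)).
    + apply IHn; intros; apply H; lia.
    + apply H; lia.
Qed.

Lemma is_derive_sub_affine (f1 f2 : R -> R) s C t d1 d2 :
  is_derive f1 t d1 -> is_derive f2 t d2 ->
  is_derive (fun t => f1 t - f2 t - s * t + C) t (d1 - d2 - s).
Proof.
  intros H1 H2. auto_derive.
  - split; [exists d1|split; [exists d2|]]; auto.
  - rewrite (is_derive_unique (fun x : R => f1 x) t d1 H1),
            (is_derive_unique (fun x : R => f2 x) t d2 H2). ring.
Qed.

Lemma is_derive_sub_const (f1 f2 : R -> R) s t d1 d2 :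
  is_derive f1 t d1 -> is_derive f2 t d2 -> is_derive (fun t => f1 t - f2 t - s) t (d1 - d2).
Proof.
  intros H1 H2. auto_derive.
  - split; [exists d1|split; [exists d2|]]; auto.
  - rewrite (is_derive_unique (fun x : R => f1 x) t d1 H1),
            (is_derive_unique (fun x : R => f2 x) t d2 H2). ring.
Qed.

Lemma Derive_2_exp (f f1 : R -> R) f2 t :
  locally t (fun s => is_derive f s (f1 s)) -> is_derive f1 t f2 ->
  Derive_n (fun s => exp (f s)) 2 t = exp (f t) * (f1 t ^ 2 + f2).
Proof.
  intros Hf Hf1. simpl.
  assert (Hexp : forall s,
    is_derive f s (f1 s) -> Derive (fun s => exp (f s)) s = exp (f s) * f1 s).
  { intros s Hs. apply is_derive_unique. auto_derive; [exists (f1 s); exact Hs|].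
    rewrite (is_derive_unique (fun x : R => f x) s (f1 s) Hs). ring. }
  rewrite (Derive_ext_loc _ (fun s => exp (f s) * f1 s)).
  - apply is_derive_unique. pose proof (locally_singleton _ _ Hf) as Ht.
    auto_derive; [split; [exists (f1 t)|split; [exists f2|]]; auto|].
    rewrite (is_derive_unique (fun x : R => f x) t (f1 t) Ht),
            (is_derive_unique (fun x : R => f1 x) t f2 Hf1). ring.
  - eapply filter_imp; [|exact Hf]. exact Hexp.
Qed.

Lemma locally_neq_all n j (z : nat -> R) t0 :
  (forall k, (k < n)%nat -> k <> j -> z k <> t0) ->
  locally t0 (fun t => forall k, (k < n)%nat -> k <> j -> t <> z k).
Proof.
  induction n as [|n IH]; intros H.
  - apply filter_forall. intros; lia.
  - assert (Hn : locally t0 (fun t => n <> j -> t <> z n)).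
    { destruct (Nat.eq_dec n j) as [E|E].
      - apply filter_forall. intros; contradiction.
      - destruct (Rlt_dec (z n) t0).
        + apply (locally_interval _ _ (Finite (z n)) p_infty); simpl; auto. intros; lra.
        + assert (z n <> t0) by (apply H; lia).
          apply (locally_interval _ _ m_infty (Finite (z n))); simpl; auto; [lra|]. intros; lra. }
    eapply filter_imp; [|apply filter_and; [apply IH; intros; apply H; lia|exact Hn]].
    intros t [H1 H2] k Hk Hkj. destruct (Nat.eq_dec k n) as [->|Ne]; [auto|apply H1; auto; lia].
Qed.

Definition log_sinh2 mu w := ln (4 * sinh (mu * w / 2) ^ 2).
Definition log_cosh mu w := ln (2 * cosh (mu * w / 2)).

Lemma log_sinh2_opp mu w : log_sinh2 mu (- w) = log_sinh2 mu w.
Proof.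
  unfold log_sinh2. replace (mu * - w / 2) with (- (mu * w / 2)) by field.
  rewrite sinh_opp. f_equal. ring.
Qed.

Lemma log_cosh_opp mu w : log_cosh mu (- w) = log_cosh mu w.
Proof.
  unfold log_cosh. replace (mu * - w / 2) with (- (mu * w / 2)) by field.
  rewrite cosh_opp. reflexivity.
Qed.

Section ShiftedDerivatives.
Variables k mu a t : R.

Lemma is_derive_log_sinh2 : sinh (mu * (t - a) / 2) <> 0 ->
  is_derive (fun t => k * log_sinh2 mu (t - a)) t (k * (mu * coth (mu * (t - a) / 2))).
Proof.
  intros Hs. unfold log_sinh2, coth. auto_derive;
    replace (mu * (t + - a) * / 2) with (mu * (t - a) / 2) by (unfold Rdiv; ring).
  - apply Rmult_lt_0_compat; [lra|]. rewrite Rmult_1_r. apply Rsqr_pos_lt, Hs.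
  - field. exact Hs.
Qed.

Lemma is_derive_coth_shifted : sinh (mu * (t - a) / 2) <> 0 ->
  is_derive (fun t => k * (mu * coth (mu * (t - a) / 2))) t
            (k * (- (mu ^ 2 / 2) / sinh (mu * (t - a) / 2) ^ 2)).
Proof.
  intros Hs. pose proof (cosh_sq_sub_sinh_sq (mu * (t - a) / 2)).
  unfold coth. auto_derive;
    replace (mu * (t + - a) * / 2) with (mu * (t - a) / 2) by (unfold Rdiv; ring).
  - exact Hs.
  - field_simplify_eq; [|exact Hs].
    replace (cosh (mu * (t - a) / 2) ^ 2) with (1 + sinh (mu * (t - a) / 2) ^ 2) by lra. ring.
Qed.

Lemma is_derive_log_cosh :
  is_derive (fun t => k * log_cosh mu (t - a)) t (k * (mu / 2 * tanh (mu * (t - a) / 2))).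
Proof.
  pose proof (cosh_pos (mu * (t - a) / 2)).
  unfold log_cosh, tanh. auto_derive;
    replace (mu * (t + - a) * / 2) with (mu * (t - a) / 2) by (unfold Rdiv; ring).
  - lra.
  - field. lra.
Qed.

Lemma is_derive_tanh_shifted :
  is_derive (fun t => k * (mu / 2 * tanh (mu * (t - a) / 2))) t
            (k * ((mu / 2) ^ 2 / cosh (mu * (t - a) / 2) ^ 2)).
Proof.
  pose proof (cosh_pos (mu * (t - a) / 2)).
  pose proof (cosh_sq_sub_sinh_sq (mu * (t - a) / 2)).
  unfold tanh. auto_derive;
    replace (mu * (t + - a) * / 2) with (mu * (t - a) / 2) by (unfold Rdiv; ring).
  - lra.
  - field_simplify_eq; [|lra].
    replace (cosh (mu * (t - a) / 2) ^ 2) with (1 + sinh (mu * (t - a) / 2) ^ 2) by lra. ring.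
Qed.

End ShiftedDerivatives.

Definition scaled mu (x : nat -> R) i := mu * x i / 2.

Lemma scaled_sub mu (x y : nat -> R) i k : mu * (x i - y k) / 2 = scaled mu x i - scaled mu y k.
Proof. unfold scaled. field. Qed.

Lemma scaled_sub_neq0 mu a b : mu <> 0 -> a <> b -> mu * (a - b) / 2 <> 0.
Proof.
  intros Hmu Hab E. apply Hab.
  apply Rmult_integral in E as [E|E]; [|lra].
  apply Rmult_integral in E as [E|E]; lra.
Qed.

Lemma distinct_coords_scaled mu n x :
  mu <> 0 -> distinct_coords n x -> distinct_coords n (scaled mu x).
Proof.
  intros Hmu Hx i k Hi Hk Hik E. apply (scaled_sub_neq0 mu (x i) (x k) Hmu); auto.
  rewrite scaled_sub, E. ring.
Qed.

(* [log Psi] as a function of one coordinate [t], the other coordinates [z] (same species,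
   index [j] excluded) and [w] (other species) being frozen; [s] is the drift. *)
Definition coord_log_psi hbar mu g s n m j (z w : nat -> R) C t :=
  sumR n (fun k => if Nat.eqb k j then 0 else g / (2 * hbar) * log_sinh2 mu (t - z k))
  - sumR m (fun k => g / hbar * log_cosh mu (t - w k)) - s * t + C.

Definition coord_dlog_psi hbar mu g s n m j (z w : nat -> R) t :=
  sumR n (fun k => if Nat.eqb k j then 0 else g / (2 * hbar) * (mu * coth (mu * (t - z k) / 2)))
  - sumR m (fun k => g / hbar * (mu / 2 * tanh (mu * (t - w k) / 2))) - s.

Definition coord_d2log_psi hbar mu g n m j (z w : nat -> R) t :=
  sumR n (fun k => if Nat.eqb k j then 0
                   else g / (2 * hbar) * (- (mu ^ 2 / 2) / sinh (mu * (t - z k) / 2) ^ 2))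
  - sumR m (fun k => g / hbar * ((mu / 2) ^ 2 / cosh (mu * (t - w k) / 2) ^ 2)).

Section CoordinateDerivatives.
Variables (hbar mu g s : R) (n m j : nat) (z w : nat -> R) (t : R).
Hypothesis Hmu : mu <> 0.
Hypothesis Ht : forall k, (k < n)%nat -> k <> j -> t <> z k.

Lemma is_derive_coord_log_psi C :
  is_derive (coord_log_psi hbar mu g s n m j z w C) t (coord_dlog_psi hbar mu g s n m j z w t).
Proof.
  apply is_derive_sub_affine; apply is_derive_sumR; intros k Hk.
  - nat_cases; [apply (is_derive_const 0)|].
    apply is_derive_log_sinh2, sinh_neq0, scaled_sub_neq0; auto.
  - apply is_derive_log_cosh.
Qed.

Lemma is_derive_coord_dlog_psi :
  is_derive (coord_dlog_psi hbar mu g s n m j z w) t (coord_d2log_psi hbar mu g n m j z w t).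
Proof.
  apply is_derive_sub_const; apply is_derive_sumR; intros k Hk.
  - nat_cases; [apply (is_derive_const 0)|].
    apply is_derive_coth_shifted, sinh_neq0, scaled_sub_neq0; auto.
  - apply is_derive_tanh_shifted.
Qed.

End CoordinateDerivatives.

Section CoordinateValues.
Variables (hbar mu g s : R) (n m j : nat) (x y : nat -> R).
Hypothesis Hh : hbar <> 0.

Lemma coord_dlog_psi_at :
  coord_dlog_psi hbar mu g s n m j x y (x j) =
  mu * g / (2 * hbar) * (coth_sum n (scaled mu x) j - tanh_sum m (scaled mu x) (scaled mu y) j) - s.
Proof.
  unfold coord_dlog_psi, coth_sum, tanh_sum.
  rewrite Rmult_minus_distr_l, <- !sumR_scal. f_equal. f_equal.
  - apply sumR_ext; intros k _. nat_cases; [ring|]. rewrite scaled_sub. field. exact Hh.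
  - apply sumR_ext; intros k _. rewrite scaled_sub. field. exact Hh.
Qed.

Lemma coord_d2log_psi_at :
  coord_d2log_psi hbar mu g n m j x y (x j) =
  - (g * mu ^ 2 / (4 * hbar)) *
    (csch2_sum n (scaled mu x) j + sech2_sum m (scaled mu x) (scaled mu y) j).
Proof.
  unfold coord_d2log_psi, csch2_sum, sech2_sum.
  rewrite Rmult_plus_distr_l, <- !sumR_scal. unfold Rminus at 1. f_equal.
  - apply sumR_ext; intros k _. nat_cases; [ring|].
    rewrite scaled_sub. unfold Rdiv. set (S := / sinh _ ^ 2). field. exact Hh.
  - rewrite <- sumR_opp. apply sumR_ext; intros k _.
    rewrite scaled_sub. unfold Rdiv. set (S := / cosh _ ^ 2). field. exact Hh.
Qed.
End CoordinateValues.

(** * The wave function as an exponential *)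

Definition pair_log_psi hbar mu g n (z : nat -> R) :=
  sumR n (fun p => sumR n (fun q =>
    if Nat.ltb p q then g / (2 * hbar) * log_sinh2 mu (z p - z q) else 0)).

(* [log Psi] for [n] particles [x] and [m] particles [y], with drift parameter [c]
   ([c = l] for [Psi_l]). *)
Definition log_psi hbar mu g n m c (x y : nat -> R) :=
  pair_log_psi hbar mu g n x + pair_log_psi hbar mu g m y
  + mu * g * c / (2 * hbar) * (sumR m (fun k => y k) - sumR n (fun k => x k))
  - sumR n (fun i => sumR m (fun k => g / hbar * log_cosh mu (x i - y k))).

Lemma Psi_l_exp hbar mu g N l x y :
  Psi_l hbar mu g N l x y = exp (log_psi hbar mu g N (N - l) (INR l) x y).
Proof.
  assert (HW : forall n z, W_nr_sqrt hbar mu g n z = exp (pair_log_psi hbar mu g n z)).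
  { intros n z. unfold W_nr_sqrt, pair_log_psi. rewrite <- prodR_exp. apply prodR_ext; intros p _.
    rewrite <- prodR_exp. apply prodR_ext; intros q _.
    destruct (Nat.ltb p q); [reflexivity|]. rewrite exp_0; reflexivity. }
  assert (HK : prodR N (fun i => prodR (N - l) (fun k =>
                 Rpower (2 * cosh (mu * (x i - y k) / 2)) (g / hbar))) =
               exp (sumR N (fun i => sumR (N - l) (fun k => g / hbar * log_cosh mu (x i - y k))))).
  { rewrite <- prodR_exp. apply prodR_ext; intros i _.
    rewrite <- prodR_exp. apply prodR_ext; intros k _. reflexivity. }
  unfold Psi_l, K_l, log_psi. rewrite !HW, HK.
  unfold Rdiv. rewrite <- exp_Ropp, <- !exp_plus. f_equal. ring.
Qed.

Lemma log_psi_swap hbar mu g n m c x y :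
  log_psi hbar mu g n m c x y = log_psi hbar mu g m n (- c) y x.
Proof.
  unfold log_psi. rewrite (sumR_swap n m).
  rewrite (sumR_ext m (fun k => sumR n (fun i => g / hbar * log_cosh mu (x i - y k)))
                      (fun k => sumR n (fun i => g / hbar * log_cosh mu (y k - x i)))).
  - unfold Rdiv. ring.
  - intros k _. apply sumR_ext; intros i _. rewrite <- log_cosh_opp. f_equal. f_equal. ring.
Qed.

Lemma upd_id x j : upd x j (x j) = x.
Proof. apply functional_extensionality; intros k. unfold upd. nat_cases; reflexivity. Qed.

Lemma sumR_upd n j (F : nat -> R -> R) z t : (j < n)%nat ->
  sumR n (fun i => F i (upd z j t i)) =
  F j t + sumR n (fun i => if Nat.eqb i j then 0 else F i (z i)).
Proof.
  intros Hj. rewrite <- (sumR_kronecker n j (fun i => F i t) Hj), <- sumR_add.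
  apply sumR_ext; intros i _. unfold upd. nat_cases; ring.
Qed.

Lemma pair_sum_upd n j (L : R -> R) z t : (j < n)%nat -> (forall w, L (- w) = L w) ->
  sumR n (fun p => sumR n (fun q => if Nat.ltb p q then L (upd z j t p - upd z j t q) else 0)) =
  sumR n (fun k => if Nat.eqb k j then 0 else L (t - z k)) +
  sumR n (fun p => sumR n (fun q =>
    if Nat.ltb p q then (if Nat.eqb p j then 0 else if Nat.eqb q j then 0 else L (z p - z q))
    else 0)).
Proof.
  intros Hj HL.
  set (row p q := if Nat.eqb p j then (if Nat.ltb p q then L (t - z q) else 0) else 0).
  set (col p q := if Nat.eqb q j then (if Nat.ltb p q then L (t - z p) else 0) else 0).
  set (rest p q := if Nat.ltb p q then
                     (if Nat.eqb p j then 0 else if Nat.eqb q j then 0 else L (z p - z q))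
                   else 0).
  assert (Hrow : sumR n (fun p => sumR n (fun q => row p q)) =
                 sumR n (fun q => if Nat.ltb j q then L (t - z q) else 0)).
  { unfold row. rewrite (sumR_ext n _ (fun p => if Nat.eqb p j then
      sumR n (fun q => if Nat.ltb p q then L (t - z q) else 0) else 0)) by (intros; apply sumR_if).
    apply (sumR_kronecker n j (fun p =>
             sumR n (fun q => if Nat.ltb p q then L (t - z q) else 0)) Hj). }
  assert (Hcol : sumR n (fun p => sumR n (fun q => col p q)) =
                 sumR n (fun p => if Nat.ltb p j then L (t - z p) else 0)).
  { apply sumR_ext; intros p _.
    apply (sumR_kronecker n j (fun q => if Nat.ltb p q then L (t - z p) else 0) Hj). }
  transitivity (sumR n (fun p => sumR n (fun q => row p q)) +
                sumR n (fun p => sumR n (fun q => col p q)) +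
                sumR n (fun p => sumR n (fun q => rest p q))).
  - rewrite <- !sumR_add. apply sumR_ext; intros p _. rewrite <- !sumR_add.
    apply sumR_ext; intros q _. unfold row, col, rest, upd. nat_cases; try ring.
    replace (z p - t) with (- (t - z p)) by ring. rewrite HL. ring.
  - rewrite Hrow, Hcol, <- sumR_add. f_equal.
    apply sumR_ext; intros k _. nat_cases; ring.
Qed.

Lemma log_psi_upd hbar mu g n m c x y j : (j < n)%nat ->
  exists C, forall t,
    log_psi hbar mu g n m c (upd x j t) y =
    coord_log_psi hbar mu g (mu * g * c / (2 * hbar)) n m j x y C t.
Proof.
  intros Hj.
  set (s := mu * g * c / (2 * hbar)).
  assert (Hpair : forall t, pair_log_psi hbar mu g n (upd x j t) =
    sumR n (fun k => if Nat.eqb k j then 0 else g / (2 * hbar) * log_sinh2 mu (t - x k)) +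
    sumR n (fun p => sumR n (fun q => if Nat.ltb p q then (if Nat.eqb p j then 0
      else if Nat.eqb q j then 0 else g / (2 * hbar) * log_sinh2 mu (x p - x q)) else 0))).
  { intros t. apply (pair_sum_upd n j (fun w => g / (2 * hbar) * log_sinh2 mu w)); [exact Hj|].
    intros w. rewrite log_sinh2_opp. reflexivity. }
  assert (Hshift : forall t,
    log_psi hbar mu g n m c (upd x j t) y - coord_log_psi hbar mu g s n m j x y 0 t =
    log_psi hbar mu g n m c (upd x j (x j)) y - coord_log_psi hbar mu g s n m j x y 0 (x j)).
  { intros t. unfold log_psi, coord_log_psi. rewrite !Hpair.
    rewrite !(sumR_upd n j (fun _ v => v)), !(sumR_upd n j (fun _ v =>
      sumR m (fun k => g / hbar * log_cosh mu (v - y k)))) by exact Hj.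
    fold s. ring. }
  exists (log_psi hbar mu g n m c (upd x j (x j)) y - coord_log_psi hbar mu g s n m j x y 0 (x j)).
  intros t. specialize (Hshift t). unfold coord_log_psi in *. lra.
Qed.

Lemma partial2_exp_log_psi hbar mu g n m c x y j :
  hbar <> 0 -> mu <> 0 -> (j < n)%nat -> distinct_coords n x ->
  partial2 (fun x' => exp (log_psi hbar mu g n m c x' y)) j x =
  exp (log_psi hbar mu g n m c x y) *
  ((mu * g / (2 * hbar)) ^ 2 *
     (coth_sum n (scaled mu x) j - tanh_sum m (scaled mu x) (scaled mu y) j - c) ^ 2
   - g * mu ^ 2 / (4 * hbar) *
     (csch2_sum n (scaled mu x) j + sech2_sum m (scaled mu x) (scaled mu y) j)).
Proof.
  intros Hh Hmu Hj Hx. unfold partial2.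
  set (s := mu * g * c / (2 * hbar)).
  destruct (log_psi_upd hbar mu g n m c x y j Hj) as [C HC].
  assert (Hfar : forall k, (k < n)%nat -> k <> j -> x k <> x j) by (intros; apply Hx; auto).
  rewrite (Derive_n_ext _ (fun t => exp (coord_log_psi hbar mu g s n m j x y C t)))
    by (intros t; rewrite HC; reflexivity).
  rewrite (Derive_2_exp _ (coord_dlog_psi hbar mu g s n m j x y)
                          (coord_d2log_psi hbar mu g n m j x y (x j))).
  - rewrite <- HC, upd_id, coord_dlog_psi_at, coord_d2log_psi_at by exact Hh.
    unfold s. field. exact Hh.
  - eapply filter_imp; [|apply (locally_neq_all n j x (x j) Hfar)].
    intros t Ht. apply is_derive_coord_log_psi; auto.
  - apply is_derive_coord_dlog_psi; auto.
Qed.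

Lemma sumR_pair_potential mu n z :
  sumR n (fun j => sumR n (fun l =>
    if Nat.ltb j l then mu ^ 2 / (4 * sinh (mu * (z j - z l) / 2) ^ 2) else 0)) =
  mu ^ 2 / 8 * sumR n (csch2_sum n (scaled mu z)).
Proof.
  enough (2 * sumR n (fun j => sumR n (fun l =>
    if Nat.ltb j l then mu ^ 2 / (4 * sinh (mu * (z j - z l) / 2) ^ 2) else 0)) =
    mu ^ 2 / 4 * sumR n (csch2_sum n (scaled mu z))) by lra.
  rewrite sumR_pairs_sym.
  - unfold csch2_sum. rewrite <- sumR_scal. apply sumR_ext; intros j _.
    rewrite <- sumR_scal. apply sumR_ext; intros k _. nat_cases; [ring|].
    rewrite scaled_sub. unfold Rdiv. rewrite Rinv_mult. ring.
  - intros j k. replace (z k - z j) with (- (z j - z k)) by ring.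
    replace (mu * - (z j - z k) / 2) with (- (mu * (z j - z k) / 2)) by field.
    rewrite sinh_opp. f_equal. f_equal. ring.
Qed.

Lemma H_nr_exp_log_psi hbar mu g n m c x y :
  hbar <> 0 -> mu <> 0 -> distinct_coords n x ->
  H_nr hbar mu g n (fun x' => exp (log_psi hbar mu g n m c x' y)) x =
  exp (log_psi hbar mu g n m c x y) *
  (- (mu ^ 2 * g ^ 2 / 8) * coth_tanh_energy n m (scaled mu x) (scaled mu y) c
   + g * hbar * mu ^ 2 / 8 * sumR n (sech2_sum m (scaled mu x) (scaled mu y))).
Proof.
  intros Hh Hmu Hx. unfold H_nr, coth_tanh_energy.
  rewrite (sumR_ext n _ _ (fun j Hj => partial2_exp_log_psi hbar mu g n m c x y j Hh Hmu Hj Hx)).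
  rewrite sumR_scal, sumR_sub, !sumR_scal, sumR_add, sumR_pair_potential.
  field. exact Hh.
Qed.

Theorem corollary4p2 (hbar mu g : R) (N l : nat) (x y : nat -> R) :
  0 < hbar -> 0 < mu -> 0 < g -> (l <= N)%nat ->
  distinct_coords N x -> distinct_coords (N - l) y ->
  H_nr hbar mu g N (fun x' => Psi_l hbar mu g N l x' y) x
  - H_nr hbar mu g (N - l) (fun y' => Psi_l hbar mu g N l x y') y
  = - (mu ^ 2 * g ^ 2 / 24) * INR l * (4 * INR l ^ 2 - 1) * Psi_l hbar mu g N l x y.
Proof.
  intros Hh Hmu _ Hl Hx Hy.
  assert (Hh0 : hbar <> 0) by lra. assert (Hmu0 : mu <> 0) by lra.
  assert (Ex : (fun x' => Psi_l hbar mu g N l x' y) =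
               (fun x' => exp (log_psi hbar mu g N (N - l) (INR l) x' y))).
  { apply functional_extensionality; intros x'. apply Psi_l_exp. }
  assert (Ey : (fun y' => Psi_l hbar mu g N l x y') =
               (fun y' => exp (log_psi hbar mu g (N - l) N (- INR l) y' x))).
  { apply functional_extensionality; intros y'. rewrite Psi_l_exp, log_psi_swap. reflexivity. }
  rewrite Ex, Ey, !H_nr_exp_log_psi by assumption.
  rewrite <- log_psi_swap, <- Psi_l_exp, <- sumR_sech2_sum_swap.
  pose proof (coth_tanh_energy_difference N (N - l) l (scaled mu x) (scaled mu y)
                (distinct_coords_scaled mu N x Hmu0 Hx)
                (distinct_coords_scaled mu (N - l) y Hmu0 Hy) ltac:(lia)) as Hdiff.
  set (Psi := Psi_l hbar mu g N l x y) in *.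
  transitivity (- (mu ^ 2 * g ^ 2 / 8) * Psi *
    (coth_tanh_energy N (N - l) (scaled mu x) (scaled mu y) (INR l)
     - coth_tanh_energy (N - l) N (scaled mu y) (scaled mu x) (- INR l))); [ring|].
  rewrite Hdiff. field.
Qed.
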